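(* Let $n\ge1$, $\lambda\in\mathbb{D}$, and let $\sigma_{n,\lambda}=(\lambda,\lambda,\dots,\lambda)$ ($n$ times). Then $$I\big(\sigma_{n,\lambda},H^2,B^{1/2}_{2,2}\big)\ge\sqrt{\frac{n}{1-|\lambda|}}\left[\frac{(1+|\lambda|)^2-\frac2n-\frac{2|\lambda|}{n}}{2(1+|\lambda|)}\right]^{1/2}$$ (whenever the bracket is nonnegative).
   Context: $\mathbb{D}$ is the open unit disc, $\hat f(k)$ the $k$-th Taylor coefficient. $\|f\|_{H^2}^2=\sum_{k\ge0}|\hat f(k)|^2$; the Dirichlet space $B^{1/2}_{2,2}=\{f:\|f\|^2_{B^{1/2}_{2,2}}=\sum_{k\ge0}(k+1)|\hat f(k)|^2<\infty\}$. For $\lambda\in\mathbb{D}$, $b_\lambda(z)=\frac{\lambda-z}{1-\bar\lambda z}$; for a finite sequence $\sigma=(\lambda_1,\dots,\lambda_n)$ in $\mathbb{D}$ (repetitions allowed), $B_\sigma=\prod_j b_{\lambda_j}$, and ''$g_{|\sigma}=f_{|\sigma}$'' means $f-g\in B_\sigma\mathrm{Hol}(\mathbb{D})$. $I(\sigma,X,Y)=\sup_{f\in X,\|f\|_X\le1}\inf\{\|g\|_Y: g\in Y,\ g_{|\sigma}=f_{|\sigma}\}$. *)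

From Stdlib Require Export Reals List.
Export ListNotations.
Open Scope R_scope.

Definition Cx : Type := (R * R)%type.
Definition Cre (z : Cx) : R := fst z.
Definition Cim (z : Cx) : R := snd z.
Definition C0 : Cx := (0, 0).
Definition C1 : Cx := (1, 0).
Definition Cadd (z w : Cx) : Cx := (fst z + fst w, snd z + snd w).
Definition Copp (z : Cx) : Cx := (- fst z, - snd z).
Definition Csub (z w : Cx) : Cx := Cadd z (Copp w).
Definition Cmul (z w : Cx) : Cx :=
  (fst z * fst w - snd z * snd w, fst z * snd w + snd z * fst w).
Definition Cconj (z : Cx) : Cx := (fst z, - snd z).
Definition Cnorm2 (z : Cx) : R := fst z * fst z + snd z * snd z.
Definition Cmod (z : Cx) : R := sqrt (Cnorm2 z).
Definition Cinv (z : Cx) : Cx := (fst z / Cnorm2 z, - snd z / Cnorm2 z).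
Definition Cdiv (z w : Cx) : Cx := Cmul z (Cinv w).
Fixpoint Cpow (z : Cx) (k : nat) : Cx :=
  match k with O => C1 | S k' => Cmul z (Cpow z k') end.

Definition inD (z : Cx) : Prop := Cmod z < 1.

Fixpoint Cpartial (u : nat -> Cx) (N : nat) : Cx :=
  match N with O => C0 | S N' => Cadd (Cpartial u N') (u N') end.

Definition Cseries_cv (u : nat -> Cx) (s : Cx) : Prop :=
  Un_cv (fun N => fst (Cpartial u N)) (fst s) /\
  Un_cv (fun N => snd (Cpartial u N)) (snd s).

(* A holomorphic function on D is represented by its Taylor coefficient
   sequence a (a k = \hat f(k)); ps_at a z s : f(z) = s. *)
Definition ps_at (a : nat -> Cx) (z s : Cx) : Prop :=
  Cseries_cv (fun k => Cmul (a k) (Cpow z k)) s.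

Definition is_hol (a : nat -> Cx) : Prop :=
  forall z, inD z -> exists s, ps_at a z s.

Definition blaschke_factor (lam z : Cx) : Cx :=
  Cdiv (Csub lam z) (Csub C1 (Cmul (Cconj lam) z)).

Fixpoint blaschke (sigma : list Cx) (z : Cx) : Cx :=
  match sigma with
  | [] => C1
  | lam :: s => Cmul (blaschke_factor lam z) (blaschke s z)
  end.

(* g_{|sigma} = f_{|sigma} :  f - g \in B_sigma Hol(D) *)
Definition same_trace (sigma : list Cx) (f g : nat -> Cx) : Prop :=
  exists h, is_hol h /\
    forall z, inD z -> forall sf sg sh,
      ps_at f z sf -> ps_at g z sg -> ps_at h z sh ->
      Csub sf sg = Cmul (blaschke sigma z) sh.

(* ||f||^2 = sum_k w k |\hat f(k)|^2 ; H^2: w k = 1 ;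
   Dirichlet space B^{1/2}_{2,2}: w k = k+1. *)
Definition wnorm_sq (w : nat -> R) (a : nat -> Cx) (l : R) : Prop :=
  infinite_sum (fun k => w k * Cnorm2 (a k)) l.

Definition in_space (w : nat -> R) (a : nat -> Cx) : Prop :=
  is_hol a /\ exists l, wnorm_sq w a l.

Definition w_H2 (k : nat) : R := 1.
Definition w_Dirichlet (k : nat) : R := INR k + 1.

(* I(sigma, X, Y) >= c, where
   I(sigma,X,Y) = sup_{f in X, ||f||_X <= 1} inf {||g||_Y : g in Y, g|sigma = f|sigma}
   (a value in [0, +oo]).  "sup_f inf_g ||g|| >= c" is written out as:
   for every c' < c there is f in the unit ball of X such that every
   admissible g has ||g||_Y >= c'. *)
Definition I_ge (sigma : list Cx) (wX wY : nat -> R) (c : R) : Prop :=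
  forall c', c' < c ->
    exists f, in_space wX f /\ (forall l, wnorm_sq wX f l -> sqrt l <= 1) /\
      forall g, in_space wY g -> same_trace sigma f g ->
        forall l, wnorm_sq wY g l -> c' <= sqrt l.

(** Let σ = (λ,…,λ) (n times), r = |λ|, s = r², and write n = a + 2 (for n = 1 the
  bracket in the bound is negative).  Put φ_k = (k+1) C(k,a) λ^(k-a) and consider the
  linear functional ψ(g) = Σ_k φ_k ĝ(k).  The proof rests on three facts.
  (i)  ψ vanishes on B_σ Hol(D): ψ(F) = (a+1)(λ F^(a+1)(λ)/(a+1)! + F^(a)(λ)/a!), and a
       function divisible by b_λ^n is O(t^n) at λ + t, so its Taylor coefficients of
       order < n at λ vanish.  Hence ψ(g) = ψ(f) whenever g|σ = f|σ.
  (ii) Cauchy–Schwarz: |ψ(g)|² ≤ D ‖g‖²_Dirichlet with D = Σ_k |φ_k|²/(k+1).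
  (iii) The normalised truncation f = (conj φ_k)_(k<K) / √N_K, N_K = Σ_(k<K) |φ_k|², is a
       unit vector of H² with ψ(f) = √N_K.
  So every admissible g satisfies ‖g‖² ≥ N_K / D, and a summation-by-parts inequality
  shows N_K / D → (a+1)(1+s)/(1-s) = (n-1)(1+r²)/(1-r²), which dominates the square of
  the claimed constant.
*)

From Coquelicot Require Import Rbar Hierarchy Lim_seq Series.
From Pilot Require Import Defs.
From Stdlib Require Import Reals List Lra Psatz Ring ClassicalEpsilon.
(** Stdlib's Reals also defines [C1]; here [C1] is the complex unit of [Defs]. *)
Notation C1 := Defs.C1.
Open Scope R_scope.

Lemma Cx_eq (z w : Cx) : fst z = fst w -> snd z = snd w -> z = w.
Proof. destruct z, w; simpl; intros; subst; reflexivity. Qed.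

Lemma Cx_ring : ring_theory C0 C1 Cadd Cmul Csub Copp (@eq Cx).
Proof.
  constructor; intros; apply Cx_eq; destruct x; try destruct y; try destruct z;
  unfold Cadd, Cmul, Csub, Copp, C0, C1; simpl; ring.
Qed.
Add Ring Cxring : Cx_ring.

Definition RC (x : R) : Cx := (x, 0).

Lemma Cmul_RC x y : Cmul (RC x) (RC y) = RC (x * y).
Proof. apply Cx_eq; unfold RC, Cmul; simpl; ring. Qed.

Lemma Cadd_RC x y : Cadd (RC x) (RC y) = RC (x + y).
Proof. apply Cx_eq; unfold RC, Cadd; simpl; ring. Qed.

Lemma Cmul_conj z : Cmul z (Cconj z) = RC (Cnorm2 z).
Proof. apply Cx_eq; unfold Cmul, Cconj, RC, Cnorm2; simpl; ring. Qed.

Lemma Cnorm2_nonneg z : 0 <= Cnorm2 z.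
Proof. unfold Cnorm2; nra. Qed.

Lemma Cnorm2_mul z w : Cnorm2 (Cmul z w) = Cnorm2 z * Cnorm2 w.
Proof. destruct z, w; unfold Cnorm2, Cmul; simpl; ring. Qed.

Lemma Cnorm2_pow z k : Cnorm2 (Cpow z k) = Cnorm2 z ^ k.
Proof.
  induction k; simpl; [unfold Cnorm2, C1; simpl; ring |].
  rewrite Cnorm2_mul, IHk; ring.
Qed.

Lemma Cnorm2_RC x : Cnorm2 (RC x) = x ^ 2.
Proof. unfold Cnorm2, RC; simpl; ring. Qed.

Lemma Cnorm2_conj z : Cnorm2 (Cconj z) = Cnorm2 z.
Proof. unfold Cnorm2, Cconj; simpl; ring. Qed.

Lemma Cmod_nonneg z : 0 <= Cmod z.
Proof. apply sqrt_pos. Qed.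

Lemma Cmod_sq z : Cmod z * Cmod z = Cnorm2 z.
Proof. apply sqrt_sqrt, Cnorm2_nonneg. Qed.

Lemma Cmod_le_sq z b : 0 <= b -> Cnorm2 z <= b * b -> Cmod z <= b.
Proof.
  intros Hb H. unfold Cmod. rewrite <- (sqrt_square b Hb). apply sqrt_le_1_alt; auto.
Qed.

Lemma Cmod_ge_sq z b : 0 <= b -> b * b <= Cnorm2 z -> b <= Cmod z.
Proof.
  intros Hb H. unfold Cmod. rewrite <- (sqrt_square b Hb). apply sqrt_le_1_alt; auto.
Qed.

Lemma Cmod_mul z w : Cmod (Cmul z w) = Cmod z * Cmod w.
Proof. unfold Cmod; rewrite Cnorm2_mul; apply sqrt_mult; apply Cnorm2_nonneg. Qed.

Lemma Cmod_RC x : Cmod (RC x) = Rabs x.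
Proof.
  apply Rle_antisym.
  - apply Cmod_le_sq; [apply Rabs_pos |]. rewrite <- Rabs_mult, Rabs_right;
      unfold Cnorm2, RC; simpl; nra.
  - apply Cmod_ge_sq; [apply Rabs_pos |]. rewrite <- Rabs_mult, Rabs_right;
      unfold Cnorm2, RC; simpl; nra.
Qed.

Lemma Cmod_C0 : Cmod C0 = 0.
Proof. change C0 with (RC 0). rewrite Cmod_RC. apply Rabs_R0. Qed.

Lemma Cmod_C1 : Cmod C1 = 1.
Proof. change C1 with (RC 1). rewrite Cmod_RC. apply Rabs_R1. Qed.

Lemma Cmod_pow z k : Cmod (Cpow z k) = Cmod z ^ k.
Proof. induction k; simpl; [apply Cmod_C1 | rewrite Cmod_mul, IHk; ring]. Qed.

Lemma Cmod_opp z : Cmod (Copp z) = Cmod z.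
Proof. unfold Cmod, Cnorm2, Copp; simpl; f_equal; ring. Qed.

Lemma Cmod_conj z : Cmod (Cconj z) = Cmod z.
Proof. unfold Cmod, Cnorm2, Cconj; simpl; f_equal; ring. Qed.

Lemma Cmod_fst z : Rabs (fst z) <= Cmod z.
Proof.
  apply Cmod_ge_sq; [apply Rabs_pos |].
  unfold Cnorm2. rewrite <- Rabs_mult, Rabs_right by nra. nra.
Qed.

Lemma Cmod_snd z : Rabs (snd z) <= Cmod z.
Proof.
  apply Cmod_ge_sq; [apply Rabs_pos |].
  unfold Cnorm2. rewrite <- Rabs_mult, Rabs_right by nra. nra.
Qed.

Lemma Cmod_le_parts z : Cmod z <= Rabs (fst z) + Rabs (snd z).
Proof.
  pose proof (Rabs_pos (fst z)); pose proof (Rabs_pos (snd z)).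
  apply Cmod_le_sq; [lra |]. unfold Cnorm2.
  rewrite <- (Rabs_right (fst z * fst z)), <- (Rabs_right (snd z * snd z)), !Rabs_mult by nra.
  nra.
Qed.

(** The triangle inequality, via Cauchy–Schwarz in R². *)
Lemma Cmod_add z w : Cmod (Cadd z w) <= Cmod z + Cmod w.
Proof.
  pose proof (Cmod_sq z) as Ez; pose proof (Cmod_sq w) as Ew.
  pose proof (Cmod_nonneg z); pose proof (Cmod_nonneg w).
  apply Cmod_le_sq; [lra |].
  destruct z as [a b], w as [c d]; unfold Cnorm2, Cadd in *; simpl in *.
  set (x := Cmod (a, b)) in *; set (y := Cmod (c, d)) in *.
  assert (Hcs : (a * c + b * d) * (a * c + b * d) <= (x * y) * (x * y)).
  { replace ((x * y) * (x * y)) with ((x * x) * (y * y)) by ring.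
    rewrite Ez, Ew. pose proof (Rle_0_sqr (a * d - b * c)). unfold Rsqr in *. nra. }
  assert (0 <= x * y) by (apply Rmult_le_pos; auto).
  assert (a * c + b * d <= x * y).
  { destruct (Rle_dec (a * c + b * d) (x * y)); auto. nra. }
  nra.
Qed.

Lemma Cmod_sub z w : Cmod (Csub z w) <= Cmod z + Cmod w.
Proof. unfold Csub. rewrite <- (Cmod_opp w). apply Cmod_add. Qed.

Lemma Cmod_sub_rev z w : Cmod z - Cmod w <= Cmod (Csub z w).
Proof.
  pose proof (Cmod_add (Csub z w) w).
  replace (Cadd (Csub z w) w) with z in * by ring. lra.
Qed.

Lemma Cmod_div z w : 0 < Cmod w -> Cmod (Cdiv z w) = Cmod z / Cmod w.
Proof.
  intros Hw. assert (Hn : Cnorm2 w <> 0).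
  { intros E. unfold Cmod in Hw. rewrite E, sqrt_0 in Hw. lra. }
  unfold Cdiv. rewrite Cmod_mul. unfold Rdiv. f_equal.
  unfold Cmod. rewrite <- sqrt_inv. f_equal.
  destruct w as [a b]; unfold Cinv, Cnorm2 in *; simpl in *. field. auto.
Qed.

Fixpoint rsum (u : nat -> R) (N : nat) : R :=
  match N with O => 0 | S N' => rsum u N' + u N' end.

Lemma rsum_ext u v N : (forall k, (k < N)%nat -> u k = v k) -> rsum u N = rsum v N.
Proof. induction N; simpl; intros; auto. rewrite IHN, H; auto. Qed.

Lemma rsum_plus u v N : rsum (fun k => u k + v k) N = rsum u N + rsum v N.
Proof. induction N; simpl; try rewrite IHN; ring. Qed.

Lemma rsum_scal c u N : rsum (fun k => c * u k) N = c * rsum u N.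
Proof. induction N; simpl; try rewrite IHN; ring. Qed.

Lemma rsum_le u v N : (forall k, (k < N)%nat -> u k <= v k) -> rsum u N <= rsum v N.
Proof.
  induction N; simpl; intros H; [lra |].
  pose proof (H N ltac:(lia)). pose proof (IHN ltac:(intros; apply H; lia)). lra.
Qed.

Lemma rsum_nonneg u N : (forall k, 0 <= u k) -> 0 <= rsum u N.
Proof. intros H. induction N; simpl; [lra | pose proof (H N); lra]. Qed.

Lemma rsum_mono u N M : (forall k, 0 <= u k) -> (N <= M)%nat -> rsum u N <= rsum u M.
Proof. intros H HNM. induction HNM; simpl; [lra | pose proof (H m); lra]. Qed.

Lemma rsum_abs u N : Rabs (rsum u N) <= rsum (fun k => Rabs (u k)) N.
Proof.
  induction N; simpl; [rewrite Rabs_R0; lra |].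
  pose proof (Rabs_triang (rsum u N) (u N)); lra.
Qed.

Lemma rsum_shift u m : rsum u (S m) = u O + rsum (fun j => u (S j)) m.
Proof. induction m; simpl in *; [ring | rewrite IHm; ring]. Qed.

Lemma rsum_telescope d K : rsum (fun k => d k - d (S k)) K = d O - d K.
Proof. induction K; simpl; try rewrite IHK; ring. Qed.

Lemma rsum_fin u K : (forall k, (K <= k)%nat -> u k = 0) -> Un_cv (rsum u) (rsum u K).
Proof.
  intros H eps He. exists K. intros m Hm. unfold Rdist.
  assert (E : rsum u m = rsum u K).
  { induction Hm; auto. simpl. rewrite IHHm, H by lia. ring. }
  rewrite E, Rminus_diag, Rabs_R0. auto.
Qed.

Lemma rsum_inf u L : Un_cv (rsum u) L <-> infinite_sum u L.
Proof.
  assert (Hs : forall N, rsum u (S N) = sum_f_R0 u N).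
  { induction N; simpl in *; [ring | rewrite <- IHN; reflexivity]. }
  rewrite <- is_lim_seq_Reals, (is_lim_seq_incr_1 (rsum u) L), is_lim_seq_Reals.
  split; intros H eps He; destruct (H eps He) as [N HN]; exists N; intros m Hm;
    specialize (HN m Hm); unfold Rdist in *; rewrite ?Hs in *; auto.
Qed.

Lemma rsum_series u L : Un_cv (rsum u) L <-> is_series u L.
Proof. rewrite rsum_inf. symmetry. apply is_series_Reals. Qed.

Lemma cv_le x L B : Un_cv x L -> (forall N, x N <= B) -> L <= B.
Proof.
  intros H Hb. rewrite <- is_lim_seq_Reals in H.
  assert (Hl : Rbar_le L B) by (apply (is_lim_seq_le x (fun _ => B)); auto; apply is_lim_seq_const).
  exact Hl.
Qed.

Lemma cv_ge x L B : Un_cv x L -> (forall N, B <= x N) -> B <= L.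
Proof.
  intros H Hb. rewrite <- is_lim_seq_Reals in H.
  assert (Hl : Rbar_le B L) by (apply (is_lim_seq_le (fun _ => B) x); auto; apply is_lim_seq_const).
  exact Hl.
Qed.

Lemma rsum_le_lim u L N : Un_cv (rsum u) L -> (forall k, 0 <= u k) -> rsum u N <= L.
Proof.
  intros H Hu. apply (cv_ge (fun M => rsum u (M + N)%nat)).
  - intros eps He. destruct (H eps He) as [M HM]. exists M. intros m Hm. apply HM. lia.
  - intros M. apply rsum_mono; auto; lia.
Qed.

Lemma rsum_cv_compare u v L : (forall k, Rabs (u k) <= v k) -> Un_cv (rsum v) L ->
  exists L', Un_cv (rsum u) L'.
Proof.
  intros H Hv. rewrite rsum_series in Hv.
  destruct (ex_series_le u v H (ex_intro _ L Hv)) as [L' HL'].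
  exists L'. apply rsum_series. auto.
Qed.

Lemma rsum_cv_bounded u B : (forall k, 0 <= u k) -> (forall N, rsum u N <= B) ->
  exists L, Un_cv (rsum u) L.
Proof.
  intros Hu Hb. destruct (growing_cv (rsum u)) as [L HL]; [| | exists L; auto].
  - intros N; simpl; pose proof (Hu N); lra.
  - exists B. intros x [N ->]. auto.
Qed.

Lemma rsum_cv_scal c u L : Un_cv (rsum u) L -> Un_cv (rsum (fun k => c * u k)) (c * L).
Proof.
  intros H. apply (Un_cv_ext (fun N => c * rsum u N)); [intros; rewrite rsum_scal; auto |].
  apply CV_mult; auto. intros eps He; exists O; intros; unfold Rdist.
  rewrite Rminus_diag, Rabs_R0; auto.
Qed.

Lemma rsum_terms_to_0 u L : Un_cv (rsum u) L -> Un_cv u 0.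
Proof.
  intros H. rewrite rsum_series in H. apply is_lim_seq_Reals.
  apply ex_series_lim_0. exists L; auto.
Qed.

Lemma pow_le1 x k : 0 <= x <= 1 -> x ^ k <= 1.
Proof. intros H. induction k; simpl; [lra | pose proof (pow_le x k ltac:(lra)); nra]. Qed.

Lemma pow_diff_le x m : 0 <= x -> (x + 1) ^ S m - x ^ S m <= INR (S m) * (x + 1) ^ m.
Proof.
  intros Hx. induction m; [simpl; lra |].
  assert (E : (x + 1) ^ S (S m) - x ^ S (S m)
            = (x + 1) * ((x + 1) ^ S m - x ^ S m) + x ^ S m) by (simpl; ring).
  rewrite E, S_INR.
  assert (x ^ S m <= (x + 1) ^ S m) by (apply pow_incr; lra).
  assert ((x + 1) * ((x + 1) ^ S m - x ^ S m) <= (x + 1) * (INR (S m) * (x + 1) ^ m))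
    by (apply Rmult_le_compat_l; lra).
  change ((x + 1) ^ S m) with ((x + 1) * (x + 1) ^ m) in *. nra.
Qed.

(** Σ_k (k+1)^m q^k has bounded partial sums for 0 ≤ q < 1; by induction on m,
    multiplying by (1 - q) and summing by parts. *)
Lemma poly_geom_bounded m q : 0 <= q < 1 ->
  exists B, forall K, rsum (fun k => (INR k + 1) ^ m * q ^ k) K <= B.
Proof.
  intros Hq. induction m as [|m [B HB]].
  - exists (/ (1 - q)). intros K.
    assert (E : (1 - q) * rsum (fun k => (INR k + 1) ^ 0 * q ^ k) K = 1 - q ^ K).
    { rewrite <- rsum_scal, (rsum_ext _ (fun k => q ^ k - q ^ S k)) by (intros; simpl; ring).
      rewrite rsum_telescope. simpl; ring. }
    assert (0 <= q ^ K) by (apply pow_le; lra).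
    apply (Rmult_le_reg_l (1 - q)); [lra |]. rewrite E, Rinv_r by lra. lra.
  - exists (INR (S m) * B / (1 - q)). intros K.
    apply (Rmult_le_reg_l (1 - q)); [lra |].
    replace ((1 - q) * (INR (S m) * B / (1 - q))) with (INR (S m) * B) by (field; lra).
    rewrite <- rsum_scal.
    rewrite (rsum_ext _ (fun k => ((INR k + 1) ^ S m - INR k ^ S m) * q ^ k
               + (INR k ^ S m * q ^ k - INR (S k) ^ S m * q ^ S k)))
      by (intros k _; rewrite S_INR; simpl; ring).
    rewrite rsum_plus, (rsum_telescope (fun k => INR k ^ S m * q ^ k)).
    assert (0 <= INR K ^ S m * q ^ K)
      by (apply Rmult_le_pos; apply pow_le; try apply pos_INR; lra).
    assert (rsum (fun k => ((INR k + 1) ^ S m - INR k ^ S m) * q ^ k) K <= INR (S m) * B).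
    { rewrite <- (Rmult_le_compat_l (INR (S m)) _ _ (pos_INR _) (HB K)), <- rsum_scal.
      apply rsum_le. intros k _. rewrite <- Rmult_assoc.
      apply Rmult_le_compat_r; [apply pow_le; lra | apply pow_diff_le, pos_INR]. }
    simpl (INR 0 ^ S m * q ^ 0) in *. lra.
Qed.

Lemma poly_geom_summable m q : 0 <= q < 1 ->
  exists L, Un_cv (rsum (fun k => (INR k + 1) ^ m * q ^ k)) L.
Proof.
  intros Hq. destruct (poly_geom_bounded m q Hq) as [B HB].
  apply (rsum_cv_bounded _ B); auto. intros k.
  apply Rmult_le_pos; apply pow_le; [pose proof (pos_INR k) |]; lra.
Qed.

Definition Ccv (x : nat -> Cx) (l : Cx) : Prop :=
  Un_cv (fun N => fst (x N)) (fst l) /\ Un_cv (fun N => snd (x N)) (snd l).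

Lemma Ccv_const c : Ccv (fun _ => c) c.
Proof.
  split; intros eps He; exists O; intros; unfold Rdist; rewrite Rminus_diag, Rabs_R0; auto.
Qed.

Lemma Ccv_ext x y l : (forall N, x N = y N) -> Ccv x l -> Ccv y l.
Proof.
  intros E [H1 H2]; split; [apply (Un_cv_ext (fun N => fst (x N))) | apply (Un_cv_ext (fun N => snd (x N)))];
    auto; intros; rewrite E; auto.
Qed.

Lemma Ccv_plus x y l m : Ccv x l -> Ccv y m -> Ccv (fun N => Cadd (x N) (y N)) (Cadd l m).
Proof. intros [H1 H2] [H3 H4]; split; simpl; apply CV_plus; auto. Qed.

Lemma Ccv_scal c x l : Ccv x l -> Ccv (fun N => Cmul c (x N)) (Cmul c l).
Proof.
  intros [H1 H2]; pose proof (Ccv_const c) as [Hc1 Hc2]; unfold Cmul; split; simpl.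
  - apply CV_minus; apply CV_mult; auto.
  - apply CV_plus; apply CV_mult; auto.
Qed.

Lemma Ccv_sub x y l m : Ccv x l -> Ccv y m -> Ccv (fun N => Csub (x N) (y N)) (Csub l m).
Proof.
  intros Hx Hy. apply (Ccv_ext (fun N => Cadd (x N) (Cmul (RC (-1)) (y N)))).
  - intros; apply Cx_eq; unfold Cadd, Cmul, Csub, Copp, RC; simpl; ring.
  - replace (Csub l m) with (Cadd l (Cmul (RC (-1)) m))
      by (apply Cx_eq; unfold Cadd, Cmul, Csub, Copp, RC; simpl; ring).
    apply Ccv_plus, Ccv_scal; auto.
Qed.

Lemma Ccv_unique x l m : Ccv x l -> Ccv x m -> l = m.
Proof. intros [H1 H2] [H3 H4]. apply Cx_eq; eapply UL_sequence; eauto. Qed.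

Lemma Ccv_norm_le x l B : Ccv x l -> (forall N, Cmod (x N) <= B) -> Cmod l <= B.
Proof.
  intros [H1 H2] Hb. assert (HB : 0 <= B) by (pose proof (Hb O); pose proof (Cmod_nonneg (x O)); lra).
  apply Cmod_le_sq; auto.
  apply (cv_le (fun N => Cnorm2 (x N))); [unfold Cnorm2; apply CV_plus; apply CV_mult; auto |].
  intros N. rewrite <- Cmod_sq. pose proof (Hb N). pose proof (Cmod_nonneg (x N)). nra.
Qed.

Lemma Cpartial_ext u v N : (forall k, (k < N)%nat -> u k = v k) -> Cpartial u N = Cpartial v N.
Proof. induction N; simpl; intros; auto. rewrite IHN, H; auto. Qed.

Lemma Cpartial_plus u v N :
  Cpartial (fun k => Cadd (u k) (v k)) N = Cadd (Cpartial u N) (Cpartial v N).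
Proof. induction N; simpl; [apply Cx_eq; unfold C0, Cadd; simpl; ring | rewrite IHN; ring]. Qed.

Lemma Cpartial_sub u v N :
  Cpartial (fun k => Csub (u k) (v k)) N = Csub (Cpartial u N) (Cpartial v N).
Proof.
  induction N; simpl; [apply Cx_eq; unfold C0, Csub, Cadd, Copp; simpl; ring | rewrite IHN; ring].
Qed.

Lemma Cpartial_scal c u N : Cpartial (fun k => Cmul c (u k)) N = Cmul c (Cpartial u N).
Proof. induction N; simpl; [apply Cx_eq; unfold C0, Cmul; simpl; ring | rewrite IHN; ring]. Qed.

Lemma Cpartial_RC x N : Cpartial (fun k => RC (x k)) N = RC (rsum x N).
Proof. induction N; simpl; [reflexivity | rewrite IHN; apply Cadd_RC]. Qed.

Lemma Cpartial_fst u N : fst (Cpartial u N) = rsum (fun k => fst (u k)) N.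
Proof. induction N; simpl; auto. rewrite IHN; auto. Qed.

Lemma Cpartial_snd u N : snd (Cpartial u N) = rsum (fun k => snd (u k)) N.
Proof. induction N; simpl; auto. rewrite IHN; auto. Qed.

Lemma Cpartial_norm u N : Cmod (Cpartial u N) <= rsum (fun k => Cmod (u k)) N.
Proof.
  induction N; simpl; [rewrite Cmod_C0; lra |].
  pose proof (Cmod_add (Cpartial u N) (u N)); lra.
Qed.

Lemma Cpartial_exchange (w : nat -> nat -> Cx) n N :
  Cpartial (fun k => Cpartial (fun j => w j k) n) N
  = Cpartial (fun j => Cpartial (fun k => w j k) N) n.
Proof.
  induction n; simpl.
  - induction N; simpl; auto. rewrite IHN. apply Cx_eq; unfold Cadd, C0; simpl; ring.
  - rewrite Cpartial_plus, IHn. reflexivity.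
Qed.

Lemma Ccv_finsum (x : nat -> nat -> Cx) (l : nat -> Cx) n :
  (forall j, (j < n)%nat -> Ccv (x j) (l j)) ->
  Ccv (fun N => Cpartial (fun j => x j N) n) (Cpartial l n).
Proof.
  induction n; intros H; simpl; [apply Ccv_const |].
  apply Ccv_plus; [apply IHn; intros; apply H | apply H]; lia.
Qed.

Lemma Cpartial_fin u K : (forall k, (K <= k)%nat -> u k = C0) -> Ccv (Cpartial u) (Cpartial u K).
Proof.
  intros H. split.
  - apply (Un_cv_ext (rsum (fun k => fst (u k)))); [intros; rewrite Cpartial_fst; auto |].
    rewrite Cpartial_fst. apply rsum_fin. intros k Hk. rewrite H; auto.
  - apply (Un_cv_ext (rsum (fun k => snd (u k)))); [intros; rewrite Cpartial_snd; auto |].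
    rewrite Cpartial_snd. apply rsum_fin. intros k Hk. rewrite H; auto.
Qed.

Lemma Cseries_abs_cv u v L : (forall k, Cmod (u k) <= v k) -> Un_cv (rsum v) L ->
  exists s, Ccv (Cpartial u) s.
Proof.
  intros H Hv.
  destruct (rsum_cv_compare (fun k => fst (u k)) v L) as [L1 H1]; auto.
  { intros k; pose proof (Cmod_fst (u k)); pose proof (H k); lra. }
  destruct (rsum_cv_compare (fun k => snd (u k)) v L) as [L2 H2]; auto.
  { intros k; pose proof (Cmod_snd (u k)); pose proof (H k); lra. }
  exists (L1, L2). split; simpl.
  - apply (Un_cv_ext (rsum (fun k => fst (u k)))); auto. intros; rewrite Cpartial_fst; auto.
  - apply (Un_cv_ext (rsum (fun k => snd (u k)))); auto. intros; rewrite Cpartial_snd; auto.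
Qed.

Lemma Cseries_terms_bounded u s : Ccv (Cpartial u) s -> exists M, forall k, Cmod (u k) <= M.
Proof.
  intros [H1 H2].
  assert (T1 : Un_cv (fun k => fst (u k)) 0).
  { apply (rsum_terms_to_0 _ (fst s)), (Un_cv_ext (fun N => fst (Cpartial u N))); auto.
    intros; apply Cpartial_fst. }
  assert (T2 : Un_cv (fun k => snd (u k)) 0).
  { apply (rsum_terms_to_0 _ (snd s)), (Un_cv_ext (fun N => snd (Cpartial u N))); auto.
    intros; apply Cpartial_snd. }
  destruct (maj_by_pos _ (exist _ 0 T1)) as [M1 [_ HM1]].
  destruct (maj_by_pos _ (exist _ 0 T2)) as [M2 [_ HM2]].
  exists (M1 + M2). intros k. pose proof (Cmod_le_parts (u k)).
  specialize (HM1 k). specialize (HM2 k). lra.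
Qed.

Lemma ps_at_sub f g z sf sg : ps_at f z sf -> ps_at g z sg ->
  ps_at (fun k => Csub (f k) (g k)) z (Csub sf sg).
Proof.
  intros Hf Hg.
  apply (Ccv_ext (fun N => Csub (Cpartial (fun k => Cmul (f k) (Cpow z k)) N)
                                (Cpartial (fun k => Cmul (g k) (Cpow z k)) N))).
  - intros N. rewrite <- Cpartial_sub. apply Cpartial_ext. intros; ring.
  - apply Ccv_sub; auto.
Qed.

Lemma is_hol_sub f g : is_hol f -> is_hol g -> is_hol (fun k => Csub (f k) (g k)).
Proof.
  intros Hf Hg z Hz. destruct (Hf z Hz) as [sf Hsf]. destruct (Hg z Hz) as [sg Hsg].
  exists (Csub sf sg). apply ps_at_sub; auto.
Qed.

(** ** Growth of Taylor coefficients of holomorphic functions *)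

Lemma coef_growth a rho : is_hol a -> 0 < rho < 1 ->
  exists M, forall k, Cmod (a k) * rho ^ k <= M.
Proof.
  intros Ha Hr. destruct (Ha (RC rho)) as [s Hs].
  { unfold inD. rewrite Cmod_RC, Rabs_right; lra. }
  destruct (Cseries_terms_bounded _ _ Hs) as [M HM]. exists M. intros k.
  specialize (HM k). rewrite Cmod_mul, Cmod_pow, Cmod_RC, Rabs_right in HM by lra. auto.
Qed.

Lemma hol_weighted_summable a R1 m : is_hol a -> 0 <= R1 < 1 ->
  exists L, Un_cv (rsum (fun k => (INR k + 1) ^ m * R1 ^ k * Cmod (a k))) L.
Proof.
  intros Ha HR. set (rho := (1 + R1) / 2).
  destruct (coef_growth a rho Ha) as [M HM]; [unfold rho; lra |].
  set (q := R1 / rho).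
  assert (Hq : 0 <= q < 1).
  { assert (Hrho : 0 < rho) by (unfold rho; lra).
    unfold q. split.
    - apply Rmult_le_pos; [lra | apply Rlt_le, Rinv_0_lt_compat; auto].
    - apply (Rmult_lt_reg_r rho); auto. unfold Rdiv. rewrite Rmult_assoc, Rinv_l; unfold rho; lra. }
  destruct (poly_geom_summable m q Hq) as [L HL].
  apply (rsum_cv_compare _ (fun k => M * ((INR k + 1) ^ m * q ^ k)) (M * L));
    [| apply rsum_cv_scal; auto].
  intros k.
  assert (E : R1 ^ k = q ^ k * rho ^ k)
    by (rewrite <- Rpow_mult_distr; f_equal; unfold q; field; unfold rho; lra).
  assert (0 <= (INR k + 1) ^ m * q ^ k)
    by (apply Rmult_le_pos; apply pow_le; [pose proof (pos_INR k) |]; lra).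
  assert (0 <= q ^ k) by (apply pow_le; lra).
  assert (0 <= rho ^ k) by (apply pow_le; unfold rho; lra).
  pose proof (Cmod_nonneg (a k)). pose proof (HM k).
  rewrite E, Rabs_right by (apply Rle_ge; repeat apply Rmult_le_pos; auto; apply pow_le;
    pose proof (pos_INR k); lra).
  replace ((INR k + 1) ^ m * (q ^ k * rho ^ k) * Cmod (a k))
    with (((INR k + 1) ^ m * q ^ k) * (Cmod (a k) * rho ^ k)) by ring.
  rewrite (Rmult_comm M). apply Rmult_le_compat_l; auto.
Qed.

Lemma hol_bounded a rho : is_hol a -> 0 <= rho < 1 ->
  exists H, forall z s, Cmod z <= rho -> ps_at a z s -> Cmod s <= H.
Proof.
  intros Ha Hr. destruct (hol_weighted_summable a rho 0 Ha Hr) as [L HL].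
  exists L. intros z s Hz Hs. apply (Ccv_norm_le _ _ L Hs). intros N.
  eapply Rle_trans; [apply Cpartial_norm |].
  apply (Rle_trans _ (rsum (fun k => (INR k + 1) ^ 0 * rho ^ k * Cmod (a k)) N)).
  - apply rsum_le. intros k _. rewrite Cmod_mul, Cmod_pow, pow_O.
    assert (Cmod z ^ k <= rho ^ k) by (apply pow_incr; split; auto; apply Cmod_nonneg).
    pose proof (Cmod_nonneg (a k)). nra.
  - apply rsum_le_lim; auto. intros k. simpl. pose proof (pow_le rho k ltac:(lra)).
    pose proof (Cmod_nonneg (a k)). nra.
Qed.

Fixpoint binom (k j : nat) : R :=
  match k, j with
  | _, O => 1
  | O, S _ => 0
  | S k', S j' => binom k' j' + binom k' (S j')
  end.

Lemma binom_S k j : binom (S k) (S j) = binom k j + binom k (S j).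
Proof. reflexivity. Qed.

Lemma binom_0 k : binom k O = 1.
Proof. destruct k; reflexivity. Qed.

Lemma binom_gt k j : (k < j)%nat -> binom k j = 0.
Proof. revert j; induction k; intros j H; destruct j; try lia; simpl; auto. rewrite !IHk by lia. ring. Qed.

Lemma binom_diag k : binom k k = 1.
Proof. induction k; simpl; auto. rewrite IHk, binom_gt by lia. ring. Qed.

Lemma binom_nonneg k j : 0 <= binom k j.
Proof.
  revert j; induction k; intros j; destruct j; simpl; try lra.
  pose proof (IHk j); pose proof (IHk (S j)); lra.
Qed.

Lemma binom_le k j : binom k j <= (INR k + 1) ^ j.
Proof.
  revert j; induction k; intros j; destruct j; simpl binom; try (simpl; lra).
  - apply pow_le. simpl; lra.
  - rewrite S_INR. pose proof (IHk j); pose proof (IHk (S j)). pose proof (pos_INR k).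
    assert ((INR k + 1) ^ j <= (INR k + 1 + 1) ^ j) by (apply pow_incr; lra).
    pose proof (pow_le (INR k + 1) j ltac:(lra)). simpl in *. nra.
Qed.

Lemma binom_rel k j : (INR j + 1) * binom k (S j) = (INR k - INR j) * binom k j.
Proof.
  revert j; induction k; intros j; [destruct j; simpl; ring |].
  destruct j.
  - pose proof (IHk O). rewrite binom_S, !binom_0 in *. rewrite S_INR. simpl in *. lra.
  - rewrite !binom_S. pose proof (IHk j). pose proof (IHk (S j)). rewrite !S_INR in *. nra.
Qed.

Lemma binom_absorb k j : (INR k + 1) * binom k j = (INR j + 1) * binom (S k) (S j).
Proof. rewrite binom_S, Rmult_plus_distr_l, binom_rel. ring. Qed.

(** ** Taylor expansion at λ *)

Section Taylor.
Variable lam : Cx.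

(** [Tc j k] = C(k, j) λ^(k-j): the j-th Taylor coefficient at λ of z^k, so that
    Σ_k Tc j k F(k) = F^(j)(λ)/j!. *)
Definition Tc (j k : nat) : Cx := Cmul (RC (binom k j)) (Cpow lam (k - j)).

Lemma Tc_succ_0 k : Tc O (S k) = Cmul lam (Tc O k).
Proof. unfold Tc. rewrite !binom_0, !Nat.sub_0_r. simpl Cpow. change (RC 1) with C1. ring. Qed.

Lemma Tc_succ j k : Tc (S j) (S k) = Cadd (Cmul lam (Tc (S j) k)) (Tc j k).
Proof.
  unfold Tc. rewrite binom_S, <- Cadd_RC. simpl (S k - S j)%nat.
  destruct (Compare_dec.le_lt_dec (S j) k).
  - replace (k - j)%nat with (S (k - S j)) by lia. simpl Cpow. ring.
  - rewrite (binom_gt k (S j)) by lia. apply Cx_eq; unfold RC, Cmul, Cadd; simpl; ring.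
Qed.

Lemma Tc_bound R1 j k : Cmod lam <= R1 -> 0 < R1 ->
  Cmod (Tc j k) <= (INR k + 1) ^ j * R1 ^ k / R1 ^ j.
Proof.
  intros Hl HR. unfold Tc.
  rewrite Cmod_mul, Cmod_pow, Cmod_RC, Rabs_right by (apply Rle_ge, binom_nonneg).
  destruct (Compare_dec.le_lt_dec j k).
  - replace (R1 ^ k) with (R1 ^ (k - j) * R1 ^ j) by (rewrite <- pow_add; f_equal; lia).
    replace ((INR k + 1) ^ j * (R1 ^ (k - j) * R1 ^ j) / R1 ^ j)
      with ((INR k + 1) ^ j * R1 ^ (k - j)) by (field; apply pow_nonzero; lra).
    apply Rmult_le_compat; [apply binom_nonneg | apply pow_le, Cmod_nonneg | apply binom_le |].
    apply pow_incr. split; auto; apply Cmod_nonneg.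
  - rewrite binom_gt, Rmult_0_l by lia. unfold Rdiv.
    apply Rmult_le_pos; [apply Rmult_le_pos; apply pow_le; pose proof (pos_INR k); lra |].
    apply Rlt_le, Rinv_0_lt_compat, pow_lt; lra.
Qed.

Variable t : R.

(** The point λ + t (t real), the binomial expansion of (λ+t)^k truncated at order n,
    and its remainder. *)
Definition zt : Cx := Cadd lam (RC t).
Definition Sn (n k : nat) : Cx := Cpartial (fun j => Cmul (Tc j k) (RC (t ^ j))) n.
Definition En (n k : nat) : Cx := Csub (Cpow zt k) (Sn n k).

Lemma Sn_0 m : Sn (S m) O = C1.
Proof.
  induction m; unfold Sn in *; simpl in *.
  - unfold Tc; simpl. apply Cx_eq; unfold RC, Cmul, Cadd, C0, C1; simpl; ring.
  - rewrite IHm. unfold Tc. simpl binom. apply Cx_eq; unfold RC, Cmul, Cadd, C1; simpl; ring.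
Qed.

Lemma Sn_rec m k :
  Sn (S (S m)) (S k) = Cadd (Cmul lam (Sn (S (S m)) k)) (Cmul (RC t) (Sn (S m) k)).
Proof.
  induction m; unfold Sn in *.
  - simpl. rewrite Tc_succ_0, Tc_succ. apply Cx_eq; unfold RC, Cmul, Cadd, C0; simpl; ring.
  - change (Cpartial ?u (S ?n)) with (Cadd (Cpartial u n) (u n)). rewrite IHm, Tc_succ.
    replace (RC (t ^ S (S m))) with (Cmul (RC t) (RC (t ^ S m))) by (rewrite Cmul_RC; reflexivity).
    ring.
Qed.

Lemma En_0 m : En (S m) O = C0.
Proof. unfold En. rewrite Sn_0. simpl. ring. Qed.

Lemma En_rec m k : En (S m) (S k) = Cadd (Cmul zt (En (S m) k)) (Cmul (Tc m k) (RC (t ^ S m))).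
Proof.
  unfold En. destruct m.
  - unfold Sn. simpl. rewrite Tc_succ_0. unfold zt.
    apply Cx_eq; unfold RC, Cmul, Cadd, Csub, Copp, C0, C1; simpl; ring.
  - rewrite Sn_rec. change (Sn (S (S m)) k) with (Cadd (Sn (S m) k) (Cmul (Tc (S m) k) (RC (t ^ S m)))).
    simpl Cpow. unfold zt.
    replace (RC (t ^ S (S m))) with (Cmul (RC t) (RC (t ^ S m))) by (rewrite Cmul_RC; reflexivity).
    ring.
Qed.

Lemma En_bound R1 m k : Cmod lam <= R1 -> 0 < R1 -> 0 <= t -> Cmod zt <= R1 ->
  Cmod (En (S m) k) <= t ^ S m * ((INR k + 1) ^ S m * R1 ^ k / R1 ^ S m).
Proof.
  intros Hl HR Ht Hz. assert (HRm : 0 < R1 ^ S m) by (apply pow_lt; lra).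
  induction k.
  - rewrite En_0, Cmod_C0. apply Rmult_le_pos; [apply pow_le; auto |].
    unfold Rdiv. apply Rmult_le_pos; [apply Rmult_le_pos; apply pow_le; simpl; lra |].
    apply Rlt_le, Rinv_0_lt_compat; auto.
  - rewrite En_rec. eapply Rle_trans; [apply Cmod_add |].
    rewrite !Cmod_mul, Cmod_RC, Rabs_right by (apply Rle_ge, pow_le; auto).
    pose proof (Tc_bound R1 m k Hl HR). pose proof (Cmod_nonneg (En (S m) k)).
    pose proof (pos_INR k). pose proof (pow_le t (S m) Ht).
    assert (A : Cmod zt * Cmod (En (S m) k)
                <= R1 * (t ^ S m * ((INR k + 1) ^ S m * R1 ^ k / R1 ^ S m)))
      by (apply Rmult_le_compat; auto; apply Cmod_nonneg).
    assert (B : Cmod (Tc m k) * t ^ S m <= (INR k + 1) ^ m * R1 ^ k / R1 ^ m * t ^ S m)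
      by (apply Rmult_le_compat_r; auto).
    assert (C : (INR k + 1) ^ S m + (INR k + 1) ^ m <= (INR (S k) + 1) ^ S m).
    { rewrite S_INR. simpl.
      assert ((INR k + 1) ^ m <= (INR k + 1 + 1) ^ m) by (apply pow_incr; lra).
      pose proof (pow_le (INR k + 1) m ltac:(lra)). nra. }
    assert (E : R1 * (t ^ S m * ((INR k + 1) ^ S m * R1 ^ k / R1 ^ S m))
                + (INR k + 1) ^ m * R1 ^ k / R1 ^ m * t ^ S m
              = t ^ S m * (((INR k + 1) ^ S m + (INR k + 1) ^ m) * (R1 ^ S k / R1 ^ S m))).
    { simpl. field. split; [apply pow_nonzero |]; lra. }
    assert (0 <= R1 ^ S k / R1 ^ S m)
      by (apply Rmult_le_pos; [apply pow_le; lra | apply Rlt_le, Rinv_0_lt_compat; auto]).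
    replace ((INR (S k) + 1) ^ S m * R1 ^ S k / R1 ^ S m)
      with ((INR (S k) + 1) ^ S m * (R1 ^ S k / R1 ^ S m)) by (unfold Rdiv; ring).
    assert (t ^ S m * (((INR k + 1) ^ S m + (INR k + 1) ^ m) * (R1 ^ S k / R1 ^ S m))
            <= t ^ S m * ((INR (S k) + 1) ^ S m * (R1 ^ S k / R1 ^ S m)))
      by (apply Rmult_le_compat_l; auto; apply Rmult_le_compat_r; auto).
    lra.
Qed.

End Taylor.

Lemma zt_norm lam t : 0 <= t -> Cmod (zt lam t) <= Cmod lam + t.
Proof. intros Ht. unfold zt. eapply Rle_trans; [apply Cmod_add | rewrite Cmod_RC, Rabs_right; lra]. Qed.

Section TaylorRemainder.
Variables (lam : Cx) (R1 : R) (F : nat -> Cx) (m : nat) (L : R).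
Hypothesis HR : Cmod lam < R1 < 1.
Hypothesis HF : Un_cv (rsum (fun k => (INR k + 1) ^ S m * R1 ^ k * Cmod (F k))) L.

Let R1_pos : 0 < R1.
Proof. pose proof (Cmod_nonneg lam); lra. Qed.

Lemma taylor_coef_cv j : (j <= S m)%nat ->
  exists T, Ccv (Cpartial (fun k => Cmul (Tc lam j k) (F k))) T.
Proof.
  intros Hj.
  apply (Cseries_abs_cv _ (fun k => / R1 ^ j * ((INR k + 1) ^ S m * R1 ^ k * Cmod (F k)))
           (/ R1 ^ j * L)); [| apply rsum_cv_scal; auto].
  intros k. rewrite Cmod_mul. pose proof (Tc_bound lam R1 j k ltac:(lra) R1_pos).
  assert ((INR k + 1) ^ j <= (INR k + 1) ^ S m)
    by (apply Rle_pow; [pose proof (pos_INR k); lra | auto]).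
  assert (0 <= R1 ^ k / R1 ^ j * Cmod (F k)).
  { apply Rmult_le_pos; [| apply Cmod_nonneg].
    apply Rmult_le_pos; [apply pow_le; lra | apply Rlt_le, Rinv_0_lt_compat, pow_lt; lra]. }
  apply (Rle_trans _ ((INR k + 1) ^ j * R1 ^ k / R1 ^ j * Cmod (F k)));
    [apply Rmult_le_compat_r; auto; apply Cmod_nonneg |].
  replace (/ R1 ^ j * ((INR k + 1) ^ S m * R1 ^ k * Cmod (F k)))
    with ((INR k + 1) ^ S m * (R1 ^ k / R1 ^ j * Cmod (F k))) by (unfold Rdiv; ring).
  replace ((INR k + 1) ^ j * R1 ^ k / R1 ^ j * Cmod (F k))
    with ((INR k + 1) ^ j * (R1 ^ k / R1 ^ j * Cmod (F k))) by (unfold Rdiv; ring).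
  apply Rmult_le_compat_r; auto.
Qed.

Lemma taylor_remainder (t : R) (V : Cx) (T : nat -> Cx) :
  0 <= t -> Cmod lam + t <= R1 ->
  Ccv (Cpartial (fun k => Cmul (F k) (Cpow (zt lam t) k))) V ->
  (forall j, (j < S m)%nat -> Ccv (Cpartial (fun k => Cmul (Tc lam j k) (F k))) (T j)) ->
  Cmod (Csub V (Cpartial (fun j => Cmul (T j) (RC (t ^ j))) (S m)))
    <= t ^ S m * (L / R1 ^ S m).
Proof.
  intros Ht Htl HV HT.
  assert (Hz : Cmod (zt lam t) <= R1) by (pose proof (zt_norm lam t Ht); lra).
  assert (HRm : 0 < R1 ^ S m) by (apply pow_lt, R1_pos).
  assert (HQ : Ccv (fun N => Cpartial (fun k => Cmul (F k) (Sn lam t (S m) k)) N)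
                   (Cpartial (fun j => Cmul (T j) (RC (t ^ j))) (S m))).
  { apply (Ccv_ext (fun N => Cpartial (fun j =>
             Cmul (RC (t ^ j)) (Cpartial (fun k => Cmul (Tc lam j k) (F k)) N)) (S m))).
    - intros N. symmetry. unfold Sn.
      rewrite (Cpartial_ext _ (fun k => Cpartial (fun j => Cmul (RC (t ^ j)) (Cmul (Tc lam j k) (F k))) (S m)) N)
        by (intros k _; rewrite <- Cpartial_scal; apply Cpartial_ext; intros; ring).
      rewrite Cpartial_exchange. apply Cpartial_ext. intros j _. apply Cpartial_scal.
    - rewrite (Cpartial_ext (fun j => Cmul (T j) (RC (t ^ j))) (fun j => Cmul (RC (t ^ j)) (T j)))
        by (intros; ring).
      apply (Ccv_finsum (fun j N => Cmul (RC (t ^ j)) (Cpartial (fun k => Cmul (Tc lam j k) (F k)) N))).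
      intros j Hj. apply Ccv_scal, HT; auto. }
  apply (Ccv_norm_le _ _ _ (Ccv_sub _ _ _ _ HV HQ)). intros N.
  rewrite <- Cpartial_sub, (Cpartial_ext _ (fun k => Cmul (F k) (En lam t (S m) k)))
    by (intros k _; unfold En; ring).
  eapply Rle_trans; [apply Cpartial_norm |].
  apply (Rle_trans _ (rsum (fun k => t ^ S m / R1 ^ S m * ((INR k + 1) ^ S m * R1 ^ k * Cmod (F k))) N)).
  - apply rsum_le. intros k _. rewrite Cmod_mul.
    pose proof (En_bound lam t R1 m k ltac:(lra) R1_pos Ht Hz). pose proof (Cmod_nonneg (F k)).
    replace (t ^ S m / R1 ^ S m * ((INR k + 1) ^ S m * R1 ^ k * Cmod (F k))) with
      (Cmod (F k) * (t ^ S m * ((INR k + 1) ^ S m * R1 ^ k / R1 ^ S m))) by (field; lra).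
    apply Rmult_le_compat_l; auto.
  - rewrite rsum_scal. replace (t ^ S m * (L / R1 ^ S m)) with (t ^ S m / R1 ^ S m * L) by (field; lra).
    apply Rmult_le_compat_l.
    + apply Rmult_le_pos; [apply pow_le; auto | apply Rlt_le, Rinv_0_lt_compat; auto].
    + apply rsum_le_lim; auto. intros k. pose proof (pos_INR k). pose proof (Cmod_nonneg (F k)).
      pose proof (pow_le R1 k ltac:(lra)). pose proof (pow_le (INR k + 1) (S m) ltac:(lra)).
      apply Rmult_le_pos; [apply Rmult_le_pos |]; auto.
Qed.

End TaylorRemainder.

(** ** Polynomials that are O(t^n) near 0 have no terms of degree < n *)

Lemma const_small_zero c A d : 0 < d -> (forall t, 0 < t <= d -> Rabs c <= A * t) -> c = 0.
Proof.
  intros Hd H. destruct (Req_dec c 0) as [E | E]; auto. exfalso.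
  assert (Hc : 0 < Rabs c) by (apply Rabs_pos_lt; auto).
  pose proof (Rabs_pos A) as HA.
  set (t := Rmin d (Rabs c / (2 * (Rabs A + 1)))).
  assert (Ht0 : 0 < t) by (apply Rmin_pos; auto; apply Rdiv_lt_0_compat; lra).
  assert (Ht1 : t <= Rabs c / (2 * (Rabs A + 1))) by apply Rmin_r.
  specialize (H t (conj Ht0 (Rmin_l _ _))).
  assert (A * t <= Rabs A * t) by (apply Rmult_le_compat_r; [lra | apply Rle_abs]).
  assert (Rabs A * t <= Rabs A * (Rabs c / (2 * (Rabs A + 1)))) by (apply Rmult_le_compat_l; lra).
  assert (Rabs A * (Rabs c / (2 * (Rabs A + 1))) < Rabs c).
  { apply (Rmult_lt_reg_r (2 * (Rabs A + 1))); [lra |].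
    replace (Rabs A * (Rabs c / (2 * (Rabs A + 1))) * (2 * (Rabs A + 1))) with (Rabs A * Rabs c)
      by (field; lra). nra. }
  lra.
Qed.

Lemma rsum_poly_shift (c : nat -> R) t n :
  rsum (fun j => c j * t ^ j) (S n) = c O + t * rsum (fun j => c (S j) * t ^ j) n.
Proof.
  rewrite rsum_shift, <- rsum_scal. simpl. f_equal; [ring |]. apply rsum_ext; intros; ring.
Qed.

Lemma poly_small_zero n : forall (c : nat -> R) C d, 0 < d ->
  (forall t, 0 < t <= d -> Rabs (rsum (fun j => c j * t ^ j) n) <= C * t ^ n) ->
  forall j, (j < n)%nat -> c j = 0.
Proof.
  induction n as [|n IHn]; intros c C d Hd H j Hj; [lia |].
  set (K := rsum (fun j => Rabs (c (S j))) n).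
  assert (Hc0 : c O = 0).
  { apply (const_small_zero _ (Rabs C + K) (Rmin d 1)); [apply Rmin_pos; lra |].
    intros t [Ht0 Ht]. pose proof (Rmin_l d 1). pose proof (Rmin_r d 1).
    specialize (H t ltac:(lra)). rewrite rsum_poly_shift in H.
    assert (HQ : Rabs (rsum (fun j => c (S j) * t ^ j) n) <= K).
    { eapply Rle_trans; [apply rsum_abs |]. apply rsum_le. intros k _.
      rewrite Rabs_mult, (Rabs_right (t ^ k)) by (apply Rle_ge, pow_le; lra).
      pose proof (pow_le1 t k ltac:(lra)). pose proof (pow_le t k ltac:(lra)).
      pose proof (Rabs_pos (c (S k))). nra. }
    assert (HC : C * t ^ S n <= Rabs C * t).
    { pose proof (pow_le1 t n ltac:(lra)). pose proof (pow_le t n ltac:(lra)).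
      pose proof (Rabs_pos C). simpl.
      assert (C * (t * t ^ n) <= Rabs C * (t * t ^ n))
        by (apply Rmult_le_compat_r; [nra | apply Rle_abs]).
      assert (Rabs C * (t * t ^ n) <= Rabs C * t * 1)
        by (rewrite <- Rmult_assoc; apply Rmult_le_compat_l; [nra | auto]).
      lra. }
    pose proof (Rabs_triang_inv (c O) (- (t * rsum (fun j => c (S j) * t ^ j) n))).
    rewrite Rabs_Ropp, Rabs_mult, (Rabs_right t) in * by lra.
    replace (c O - - (t * rsum (fun j => c (S j) * t ^ j) n))
      with (c O + t * rsum (fun j => c (S j) * t ^ j) n) in * by ring.
    nra. }
  destruct j; auto.
  apply (IHn (fun j => c (S j)) C d Hd); [| lia].
  intros t Ht. specialize (H t Ht). rewrite rsum_poly_shift, Hc0, Rplus_0_l, Rabs_mult,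
    (Rabs_right t) in H by lra.
  simpl in H. apply (Rmult_le_reg_l t); lra.
Qed.

Lemma Cpoly_small_zero n (T : nat -> Cx) C d : 0 < d ->
  (forall t, 0 < t <= d -> Cmod (Cpartial (fun j => Cmul (T j) (RC (t ^ j))) n) <= C * t ^ n) ->
  forall j, (j < n)%nat -> T j = C0.
Proof.
  intros Hd H j Hj. apply Cx_eq; simpl.
  - apply (poly_small_zero n (fun j => fst (T j)) C d Hd); auto. intros t Ht.
    eapply Rle_trans; [| apply (H t Ht)]. eapply Rle_trans; [| apply Cmod_fst].
    rewrite Cpartial_fst. right. f_equal. apply rsum_ext. intros; simpl; ring.
  - apply (poly_small_zero n (fun j => snd (T j)) C d Hd); auto. intros t Ht.
    eapply Rle_trans; [| apply (H t Ht)]. eapply Rle_trans; [| apply Cmod_snd].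
    rewrite Cpartial_snd. right. f_equal. apply rsum_ext. intros; simpl; ring.
Qed.

(** ** Functions divisible by b_λ^n have vanishing Taylor coefficients of order < n *)

Lemma blaschke_repeat lam n z : blaschke (repeat lam n) z = Cpow (blaschke_factor lam z) n.
Proof. induction n; simpl; auto. rewrite IHn; reflexivity. Qed.

Lemma blaschke_factor_small lam t R1 : 0 <= t -> Cmod lam + t <= R1 -> R1 < 1 ->
  Cmod (blaschke_factor lam (zt lam t)) <= t / (1 - R1).
Proof.
  intros Ht Hl HR. pose proof (Cmod_nonneg lam).
  pose proof (zt_norm lam t Ht). pose proof (Cmod_nonneg (zt lam t)).
  set (w := Csub C1 (Cmul (Cconj lam) (zt lam t))).
  assert (Hw : 1 - R1 <= Cmod w).
  { pose proof (Cmod_sub_rev C1 (Cmul (Cconj lam) (zt lam t))) as Hd.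
    rewrite Cmod_C1, Cmod_mul, Cmod_conj in Hd. fold w in Hd. nra. }
  unfold blaschke_factor. fold w. rewrite Cmod_div by lra.
  replace (Csub lam (zt lam t)) with (Copp (RC t)) by (unfold zt; ring).
  rewrite Cmod_opp, Cmod_RC, Rabs_right by lra.
  apply Rmult_le_compat_l; auto. apply Rinv_le_contravar; lra.
Qed.

Lemma choice_below (P : nat -> Cx -> Prop) n :
  (forall j, (j < n)%nat -> exists x, P j x) -> exists T, forall j, (j < n)%nat -> P j (T j).
Proof.
  intros H.
  assert (H' : forall j, exists x, (j < n)%nat -> P j x).
  { intros j. destruct (Compare_dec.lt_dec j n) as [Hj | Hj].
    - destruct (H j Hj) as [x Hx]. exists x; auto.
    - exists C0. intros; lia. }
  exists (fun j => proj1_sig (constructive_indefinite_description _ (H' j))).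
  intros j. exact (proj2_sig (constructive_indefinite_description _ (H' j))).
Qed.

(** If F = b_λ^n h on D, then all Taylor coefficients
    Σ_k C(k,j) λ^(k-j) F(k) with j < n vanish: comparing the Taylor formula at λ + t
    with |F(λ+t)| = O(t^n) shows that the Taylor polynomial is O(t^n). *)
Lemma divisible_taylor_vanish n lam F : inD lam -> is_hol F ->
  (exists h, is_hol h /\ forall z, inD z -> forall sF sh,
      ps_at F z sF -> ps_at h z sh -> sF = Cmul (blaschke (repeat lam n) z) sh) ->
  forall j, (j < n)%nat -> Ccv (Cpartial (fun k => Cmul (Tc lam j k) (F k))) C0.
Proof.
  intros Hlam HF [h [Hh Hdiv]] j Hj. destruct n as [|m]; [lia |].
  unfold inD in Hlam. pose proof (Cmod_nonneg lam).
  set (R1 := (1 + Cmod lam) / 2).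
  assert (HR : Cmod lam < R1 < 1) by (unfold R1; lra).
  destruct (hol_weighted_summable F R1 (S m) HF ltac:(lra)) as [L HL].
  destruct (choice_below (fun j T => Ccv (Cpartial (fun k => Cmul (Tc lam j k) (F k))) T) (S m))
    as [T HT]; [intros i Hi; apply (taylor_coef_cv lam R1 F m L HR HL); lia |].
  destruct (hol_bounded h R1 Hh ltac:(lra)) as [Hb HH].
  assert (Hsmall : forall t, 0 < t <= R1 - Cmod lam ->
     Cmod (Cpartial (fun j => Cmul (T j) (RC (t ^ j))) (S m))
       <= (Hb / (1 - R1) ^ S m + L / R1 ^ S m) * t ^ S m).
  { intros t Ht. pose proof (zt_norm lam t ltac:(lra)).
    assert (Hz : inD (zt lam t)) by (unfold inD; lra).
    destruct (HF _ Hz) as [sF HsF]. destruct (Hh _ Hz) as [sh Hsh].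
    pose proof (taylor_remainder lam R1 F m L HR HL t sF T ltac:(lra) ltac:(lra) HsF HT) as Hrem.
    assert (HFsmall : Cmod sF <= t ^ S m * (Hb / (1 - R1) ^ S m)).
    { rewrite (Hdiv _ Hz _ _ HsF Hsh), Cmod_mul, blaschke_repeat, Cmod_pow.
      pose proof (blaschke_factor_small lam t R1 ltac:(lra) ltac:(lra) ltac:(lra)).
      pose proof (HH (zt lam t) sh ltac:(lra) Hsh). pose proof (Cmod_nonneg sh).
      pose proof (Cmod_nonneg (blaschke_factor lam (zt lam t))).
      replace (t ^ S m * (Hb / (1 - R1) ^ S m)) with ((t / (1 - R1)) ^ S m * Hb)
        by (unfold Rdiv; rewrite Rpow_mult_distr, pow_inv; ring).
      apply Rmult_le_compat; auto; [apply pow_le; auto | apply pow_incr; auto]. }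
    set (P := Cpartial (fun j => Cmul (T j) (RC (t ^ j))) (S m)) in *.
    replace P with (Csub sF (Csub sF P)) by ring.
    eapply Rle_trans; [apply Cmod_sub | lra]. }
  rewrite <- (Cpoly_small_zero (S m) T _ (R1 - Cmod lam) ltac:(lra) Hsmall j Hj).
  apply HT; auto.
Qed.

Lemma same_trace_divisible n lam f g : same_trace (repeat lam n) f g -> is_hol f -> is_hol g ->
  exists h, is_hol h /\ forall z, inD z -> forall sF sh,
    ps_at (fun k => Csub (f k) (g k)) z sF -> ps_at h z sh ->
    sF = Cmul (blaschke (repeat lam n) z) sh.
Proof.
  intros [h [Hh Htr]] Hf Hg. exists h. split; auto.
  intros z Hz sF sh HsF Hsh.
  destruct (Hf z Hz) as [sf Hsf]. destruct (Hg z Hz) as [sg Hsg].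
  rewrite <- (Htr z Hz sf sg sh Hsf Hsg Hsh).
  exact (Ccv_unique _ _ _ HsF (ps_at_sub _ _ _ _ _ Hsf Hsg)).
Qed.

(** ** The weights |φ_k|² and |φ_k|²/(k+1), and summation by parts *)

Section Weights.
Variables (s : R) (a : nat).
Hypothesis Hs : 0 <= s < 1.

(** With s = |λ|² and φ_k = (k+1) C(k,a) λ^(k-a): [dual_weight k] = |φ_k|²/(k+1), the
    weight of the dual Dirichlet norm, and [phi_weight k] = |φ_k|². *)
Definition dual_weight (k : nat) : R := (INR k + 1) * binom k a ^ 2 * s ^ (k - a).
Definition phi_weight (k : nat) : R := (INR k + 1) * dual_weight k.

(** Boundary term of the summation by parts below. *)
Definition sbp_rest (k : nat) : R :=
  match k with O => 0 | S k' => s * (INR k' + INR a + 2) * dual_weight k' end.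

Lemma dual_weight_nonneg k : 0 <= dual_weight k.
Proof.
  unfold dual_weight. pose proof (pos_INR k). pose proof (pow_le s (k - a) ltac:(lra)).
  pose proof (pow2_ge_0 (binom k a)). apply Rmult_le_pos; [apply Rmult_le_pos |]; lra.
Qed.

Lemma phi_weight_nonneg k : 0 <= phi_weight k.
Proof. unfold phi_weight. pose proof (pos_INR k). pose proof (dual_weight_nonneg k). nra. Qed.

Lemma dual_weight_below k : (k < a)%nat -> dual_weight k = 0.
Proof. intros H. unfold dual_weight. rewrite binom_gt by auto. ring. Qed.

Lemma dual_weight_a : dual_weight a = INR a + 1.
Proof. unfold dual_weight. rewrite binom_diag, Nat.sub_diag. simpl; ring. Qed.

Lemma dual_weight_sum_ge D : Un_cv (rsum dual_weight) D -> INR a + 1 <= D.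
Proof.
  intros HD. rewrite <- dual_weight_a. apply (Rle_trans _ (rsum dual_weight (S a))).
  - simpl. pose proof (rsum_nonneg dual_weight a dual_weight_nonneg). lra.
  - apply rsum_le_lim; auto. apply dual_weight_nonneg.
Qed.

(** One step of the summation by parts: (k - a) U_k ≥ Z_k, where U = [dual_weight] and
    Z = [sbp_rest].  For k > a it follows from C(k-1,a) = (k-a)/k · C(k,a). *)
Lemma sbp_step k : sbp_rest k <= (INR k - INR a) * dual_weight k.
Proof.
  destruct (Compare_dec.le_lt_dec k a) as [Hk | Hk].
  - assert (HZ : sbp_rest k = 0).
    { destruct k; [reflexivity |]. simpl. rewrite dual_weight_below by lia. ring. }
    rewrite HZ. destruct (Nat.eq_dec k a) as [-> | E]; [rewrite Rminus_diag; lra |].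
    rewrite dual_weight_below by lia. lra.
  - destruct k as [|k]; [lia |]. simpl sbp_rest. unfold dual_weight.
    set (c := binom (S k) a). set (d := binom k a).
    assert (Hcd : (INR k + 1) * d = (INR (S k) - INR a) * c)
      by (unfold c, d; rewrite binom_absorb, <- binom_rel; ring).
    replace (S k - a)%nat with (S (k - a)) by lia. simpl (s ^ S (k - a)).
    set (sg := s ^ (k - a)). assert (0 <= sg) by (apply pow_le; lra).
    rewrite S_INR in *. set (x := INR a) in *. set (y := INR k) in *.
    assert (x + 1 <= y + 1) by (unfold x, y; rewrite <- !S_INR; apply le_INR; lia).
    assert (0 <= x) by apply pos_INR.
    assert (Hd : d = (y + 1 - x) * c / (y + 1))
      by (apply (Rmult_eq_reg_l (y + 1)); [rewrite Hcd; field |]; lra).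
    assert (E : (y + 1 - x) * ((y + 1 + 1) * c ^ 2 * (s * sg)) - s * (y + x + 2) * ((y + 1) * d ^ 2 * sg)
              = s * sg * c ^ 2 * (y + 1 - x) * (x * x + x) / (y + 1))
      by (rewrite Hd; field; lra).
    assert (0 <= s * sg * c ^ 2 * (y + 1 - x) * (x * x + x) / (y + 1)).
    { pose proof (pow2_ge_0 c). unfold Rdiv. apply Rmult_le_pos; [| apply Rlt_le, Rinv_0_lt_compat; lra].
      apply Rmult_le_pos; [apply Rmult_le_pos; [apply Rmult_le_pos |] |]; nra. }
    lra.
Qed.

Lemma sbp_ineq K : 0 <= (1 - s) * rsum phi_weight K - (INR a + 1) * (1 + s) * rsum dual_weight K
                        + sbp_rest K.
Proof.
  induction K; simpl; [lra |].
  pose proof (sbp_step K). unfold phi_weight at 2. lra.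
Qed.

Lemma binom_pow_bound k x : s <= x -> 0 < x ->
  binom k a ^ 2 * s ^ (k - a) <= (INR k + 1) ^ (2 * a) * x ^ k / x ^ a.
Proof.
  intros Hx Hx0. destruct (Compare_dec.le_lt_dec a k).
  - replace (x ^ k) with (x ^ (k - a) * x ^ a) by (rewrite <- pow_add; f_equal; lia).
    replace ((INR k + 1) ^ (2 * a) * (x ^ (k - a) * x ^ a) / x ^ a)
      with ((INR k + 1) ^ a * (INR k + 1) ^ a * x ^ (k - a))
      by (replace (2 * a)%nat with (a + a)%nat by lia; rewrite pow_add; field;
          apply pow_nonzero; lra).
    pose proof (binom_le k a). pose proof (binom_nonneg k a).
    apply Rmult_le_compat; [apply pow2_ge_0 | apply pow_le; lra | simpl; nra | apply pow_incr; lra].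
  - rewrite binom_gt by auto. simpl. rewrite !Rmult_0_l.
    unfold Rdiv. apply Rmult_le_pos; [apply Rmult_le_pos; apply pow_le; pose proof (pos_INR k); lra |].
    apply Rlt_le, Rinv_0_lt_compat, pow_lt; lra.
Qed.

Lemma phi_weight_summable : exists N, Un_cv (rsum phi_weight) N.
Proof.
  set (x := (1 + s) / 2).
  destruct (poly_geom_summable (2 * a + 2) x ltac:(unfold x; lra)) as [L HL].
  apply (rsum_cv_compare _ (fun k => / x ^ a * ((INR k + 1) ^ (2 * a + 2) * x ^ k)) (/ x ^ a * L));
    [| apply rsum_cv_scal; auto].
  intros k. rewrite Rabs_right by (apply Rle_ge, phi_weight_nonneg). unfold phi_weight, dual_weight.
  pose proof (binom_pow_bound k x ltac:(unfold x; lra) ltac:(unfold x; lra)).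
  replace (/ x ^ a * ((INR k + 1) ^ (2 * a + 2) * x ^ k))
    with ((INR k + 1) * (INR k + 1) * ((INR k + 1) ^ (2 * a) * x ^ k / x ^ a))
    by (rewrite pow_add; field; apply pow_nonzero; unfold x; lra).
  replace ((INR k + 1) * ((INR k + 1) * binom k a ^ 2 * s ^ (k - a)))
    with ((INR k + 1) * (INR k + 1) * (binom k a ^ 2 * s ^ (k - a))) by ring.
  apply Rmult_le_compat_l; auto. pose proof (pos_INR k); nra.
Qed.

Lemma dual_weight_summable : exists D, Un_cv (rsum dual_weight) D.
Proof.
  destruct phi_weight_summable as [N HN]. apply (rsum_cv_compare _ phi_weight N); auto.
  intros k. rewrite Rabs_right by (apply Rle_ge, dual_weight_nonneg). unfold phi_weight.
  pose proof (dual_weight_nonneg k). pose proof (pos_INR k). nra.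
Qed.

(** The boundary term tends to 0, being dominated by (a+2) V_(k-1). *)
Lemma sbp_rest_to_0 : Un_cv sbp_rest 0.
Proof.
  destruct phi_weight_summable as [N HN]. pose proof (rsum_terms_to_0 _ _ HN) as H0.
  pose proof (pos_INR a) as Ha.
  intros eps He. destruct (H0 (eps / (INR a + 2))) as [M HM]; [apply Rdiv_lt_0_compat; lra |].
  exists (S M). intros m Hm. destruct m as [|m]; [lia |]. specialize (HM m ltac:(lia)).
  unfold Rdist in *. rewrite Rminus_0_r in *. simpl sbp_rest.
  pose proof (dual_weight_nonneg m). pose proof (pos_INR m).
  rewrite Rabs_right in HM by (apply Rle_ge, phi_weight_nonneg).
  rewrite Rabs_right by (apply Rle_ge; apply Rmult_le_pos; [apply Rmult_le_pos |]; lra).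
  unfold phi_weight in HM.
  assert (s * (INR m + INR a + 2) * dual_weight m <= (INR a + 2) * ((INR m + 1) * dual_weight m)).
  { rewrite <- Rmult_assoc. apply Rmult_le_compat_r; auto. nra. }
  apply (Rmult_lt_compat_l (INR a + 2)) in HM; [| lra].
  replace ((INR a + 2) * (eps / (INR a + 2))) with eps in HM by (field; lra). lra.
Qed.

(** Consequently the ratio Σ_(k<K) V_k / Σ_k U_k tends to (a+1)(1+s)/(1-s); in
    particular it eventually exceeds any c2 < (a+1)(1+s)/(1-s). *)
Lemma ratio_exceeds D c2 : Un_cv (rsum dual_weight) D -> 0 <= c2 ->
  c2 * (1 - s) < (INR a + 1) * (1 + s) -> exists K, c2 * D < rsum phi_weight K.
Proof.
  intros HD Hc2 Hlt. pose proof (pos_INR a).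
  pose proof (dual_weight_sum_ge D HD).
  set (G := (INR a + 1) * (1 + s) * D - (1 - s) * c2 * D).
  assert (HG : 0 < G) by (unfold G; nra).
  destruct (HD (G / (2 * (INR a + 1) * (1 + s)))) as [K1 HK1]; [apply Rdiv_lt_0_compat; nra |].
  destruct (sbp_rest_to_0 (G / 2)) as [K2 HK2]; [lra |].
  set (K := (K1 + K2)%nat). exists K.
  specialize (HK1 K ltac:(unfold K; lia)). specialize (HK2 K ltac:(unfold K; lia)).
  unfold Rdist in *. rewrite Rminus_0_r in HK2. pose proof (Rle_abs (sbp_rest K)).
  pose proof (sbp_ineq K).
  assert (rsum dual_weight K <= D) by (apply rsum_le_lim; auto; apply dual_weight_nonneg).
  rewrite Rabs_left1 in HK1 by lra.
  assert ((INR a + 1) * (1 + s) * (D - rsum dual_weight K) < G / 2).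
  { apply (Rmult_lt_compat_l ((INR a + 1) * (1 + s))) in HK1; [| nra].
    replace ((INR a + 1) * (1 + s) * (G / (2 * (INR a + 1) * (1 + s)))) with (G / 2) in HK1
      by (field; lra). lra. }
  assert (Hfin : (1 - s) * (c2 * D) < (1 - s) * rsum phi_weight K) by (unfold G in *; nra).
  apply Rmult_lt_reg_l in Hfin; lra.
Qed.

End Weights.

(** ** The functional ψ *)

Definition phi (lam : Cx) (a k : nat) : Cx :=
  Cmul (RC ((INR k + 1) * binom k a)) (Cpow lam (k - a)).

Lemma phi_norm lam a k : Cnorm2 (phi lam a k) = phi_weight (Cnorm2 lam) a k.
Proof. unfold phi, phi_weight, dual_weight. rewrite Cnorm2_mul, Cnorm2_RC, Cnorm2_pow. ring. Qed.

(** φ_k = (a+1) (λ Tc (a+1) k + Tc a k): ψ combines the Taylor coefficients of order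
    a and a+1 at λ. *)
Lemma phi_decomp lam a k :
  phi lam a k = Cmul (RC (INR a + 1)) (Cadd (Cmul lam (Tc lam (S a) k)) (Tc lam a k)).
Proof.
  unfold phi, Tc. rewrite binom_absorb, binom_S, <- Cmul_RC, <- (Cadd_RC (binom k a)).
  destruct (Compare_dec.le_lt_dec (S a) k).
  - replace (k - a)%nat with (S (k - S a)) by lia. simpl Cpow. ring.
  - rewrite (binom_gt k (S a)) by lia. change (RC 0) with C0. ring.
Qed.

Lemma psi_trace_invariant lam a f g v : inD lam -> is_hol f -> is_hol g ->
  same_trace (repeat lam (S (S a))) f g ->
  Ccv (Cpartial (fun k => Cmul (phi lam a k) (f k))) v ->
  Ccv (Cpartial (fun k => Cmul (phi lam a k) (g k))) v.
Proof.
  intros Hlam Hf Hg Htr Hpf.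
  pose proof (divisible_taylor_vanish _ lam _ Hlam (is_hol_sub f g Hf Hg)
                (same_trace_divisible _ lam f g Htr Hf Hg)) as V.
  assert (HpF : Ccv (Cpartial (fun k => Cmul (phi lam a k) (Csub (f k) (g k)))) C0).
  { apply (Ccv_ext (fun N => Cmul (RC (INR a + 1))
             (Cadd (Cmul lam (Cpartial (fun k => Cmul (Tc lam (S a) k) (Csub (f k) (g k))) N))
                   (Cpartial (fun k => Cmul (Tc lam a k) (Csub (f k) (g k))) N)))).
    - intros N. rewrite <- Cpartial_scal, <- Cpartial_plus, <- Cpartial_scal.
      apply Cpartial_ext. intros k _. rewrite phi_decomp. ring.
    - replace C0 with (Cmul (RC (INR a + 1)) (Cadd (Cmul lam C0) C0)) by ring.
      apply Ccv_scal, Ccv_plus; [apply Ccv_scal |]; apply V; lia. }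
  replace v with (Csub v C0) by ring.
  apply (Ccv_ext (fun N => Csub (Cpartial (fun k => Cmul (phi lam a k) (f k)) N)
                                (Cpartial (fun k => Cmul (phi lam a k) (Csub (f k) (g k))) N))).
  - intros N. rewrite <- Cpartial_sub. apply Cpartial_ext. intros; ring.
  - apply Ccv_sub; auto.
Qed.

Lemma amgm_term x y w mu u : 0 < w -> 0 < mu -> x * x = w * u -> 0 <= x -> 0 <= y ->
  x * y <= (mu * u + w * (y * y) / mu) / 2.
Proof.
  intros Hw Hmu Hx Hx0 Hy0.
  assert (Hu : u = x * x / w) by (rewrite Hx; field; lra). subst u.
  assert (E : (mu * (x * x / w) + w * (y * y) / mu) / 2 - x * y
              = (mu * x - w * y) * (mu * x - w * y) / (2 * mu * w)) by (field; lra).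
  assert (0 <= (mu * x - w * y) * (mu * x - w * y) / (2 * mu * w)).
  { apply Rmult_le_pos; [apply Rle_0_sqr | apply Rlt_le, Rinv_0_lt_compat; nra]. }
  lra.
Qed.

Lemma amgm_optimize x D l : 0 <= x -> 0 < D -> 0 <= l ->
  (forall mu, 0 < mu -> x <= (mu * D + l / mu) / 2) -> x * x <= D * l.
Proof.
  intros Hx HD Hl H. destruct (Req_dec x 0) as [-> | Hx0]; [nra |].
  specialize (H (x / D) ltac:(apply Rdiv_lt_0_compat; lra)).
  replace ((x / D * D + l / (x / D)) / 2) with ((x + D * l / x) / 2) in H by (field; lra).
  apply (Rmult_le_compat_l x) in H; [| lra].
  replace (x * ((x + D * l / x) / 2)) with ((x * x + D * l) / 2) in H by (field; lra).
  lra.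
Qed.

Lemma psi_dirichlet_bound lam a g v D l : inD lam ->
  Ccv (Cpartial (fun k => Cmul (phi lam a k) (g k))) v ->
  Un_cv (rsum (dual_weight (Cnorm2 lam) a)) D -> wnorm_sq w_Dirichlet g l ->
  Cmod v * Cmod v <= D * l.
Proof.
  intros Hlam Hv HD Hl. unfold wnorm_sq, w_Dirichlet in Hl. rewrite <- rsum_inf in Hl.
  set (s := Cnorm2 lam) in *.
  assert (Hs : 0 <= s < 1).
  { unfold s. rewrite <- Cmod_sq. unfold inD in Hlam. pose proof (Cmod_nonneg lam). nra. }
  assert (Hg : forall k, 0 <= (INR k + 1) * Cnorm2 (g k)).
  { intros k. apply Rmult_le_pos; [pose proof (pos_INR k); lra | apply Cnorm2_nonneg]. }
  pose proof (dual_weight_sum_ge s a Hs D HD). pose proof (pos_INR a).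
  apply amgm_optimize; [apply Cmod_nonneg | lra | |].
  { apply (cv_ge _ _ 0 Hl). intros N. apply rsum_nonneg; auto. }
  intros mu Hmu. apply (Ccv_norm_le _ _ _ Hv). intros N.
  eapply Rle_trans; [apply Cpartial_norm |].
  apply (Rle_trans _ (rsum (fun k => / 2 * mu * dual_weight s a k
                                     + / (2 * mu) * ((INR k + 1) * Cnorm2 (g k))) N)).
  - apply rsum_le. intros k _. rewrite Cmod_mul, <- (Cmod_sq (g k)).
    replace (/ 2 * mu * dual_weight s a k + / (2 * mu) * ((INR k + 1) * (Cmod (g k) * Cmod (g k))))
      with ((mu * dual_weight s a k + (INR k + 1) * (Cmod (g k) * Cmod (g k)) / mu) / 2)
      by (field; lra).
    apply amgm_term; try apply Cmod_nonneg; [pose proof (pos_INR k); lra | auto |].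
    rewrite Cmod_sq, phi_norm. reflexivity.
  - rewrite rsum_plus, !rsum_scal.
    pose proof (rsum_le_lim _ _ N Hl Hg).
    pose proof (rsum_le_lim _ _ N HD (dual_weight_nonneg s a Hs)).
    assert (/ 2 * mu * rsum (dual_weight s a) N <= / 2 * mu * D)
      by (apply Rmult_le_compat_l; lra).
    assert (/ (2 * mu) * rsum (fun k => (INR k + 1) * Cnorm2 (g k)) N <= / (2 * mu) * l)
      by (apply Rmult_le_compat_l; auto; apply Rlt_le, Rinv_0_lt_compat; lra).
    replace ((mu * D + l / mu) / 2) with (/ 2 * mu * D + / (2 * mu) * l) by (field; lra).
    lra.
Qed.

Lemma test_function lam a K : 0 < rsum (phi_weight (Cnorm2 lam) a) K ->
  exists f, in_space w_H2 f /\ wnorm_sq w_H2 f 1 /\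
    Ccv (Cpartial (fun k => Cmul (phi lam a k) (f k)))
        (RC (sqrt (rsum (phi_weight (Cnorm2 lam) a) K))).
Proof.
  set (NK := rsum (phi_weight (Cnorm2 lam) a) K). intros HNK.
  assert (Hsq : 0 < sqrt NK) by (apply sqrt_lt_R0; auto).
  set (f := fun k => if Nat.ltb k K then Cmul (RC (/ sqrt NK)) (Cconj (phi lam a k)) else C0).
  assert (Hf0 : forall k, (K <= k)%nat -> f k = C0).
  { intros k Hk. unfold f. destruct (Nat.ltb_spec k K); auto. lia. }
  assert (Hfin : forall k, (k < K)%nat -> f k = Cmul (RC (/ sqrt NK)) (Cconj (phi lam a k))).
  { intros k Hk. unfold f. destruct (Nat.ltb_spec k K); auto. lia. }
  assert (Hfn : wnorm_sq w_H2 f 1).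
  { unfold wnorm_sq. apply rsum_inf.
    replace 1 with (rsum (fun k => w_H2 k * Cnorm2 (f k)) K).
    - apply rsum_fin. intros k Hk. rewrite Hf0 by auto. unfold Cnorm2, C0; simpl; ring.
    - rewrite (rsum_ext _ (fun k => / NK * phi_weight (Cnorm2 lam) a k)), rsum_scal.
      + fold NK. field. lra.
      + intros k Hk. rewrite Hfin by auto. unfold w_H2.
        rewrite Cnorm2_mul, Cnorm2_RC, Cnorm2_conj, phi_norm, pow_inv, pow2_sqrt by lra. ring. }
  exists f. split; [split; [| exists 1; auto] | split; auto].
  - intros z _. exists (Cpartial (fun k => Cmul (f k) (Cpow z k)) K).
    apply Cpartial_fin. intros k Hk. rewrite Hf0 by auto. ring.
  - replace (RC (sqrt NK)) with (Cpartial (fun k => Cmul (phi lam a k) (f k)) K).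
    + apply Cpartial_fin. intros k Hk. rewrite Hf0 by auto. ring.
    + rewrite (Cpartial_ext _ (fun k => RC (/ sqrt NK * phi_weight (Cnorm2 lam) a k))),
        Cpartial_RC, rsum_scal.
      * fold NK. f_equal. rewrite <- (sqrt_sqrt NK) at 2 by lra. field. lra.
      * intros k Hk. rewrite Hfin by auto.
        replace (Cmul (phi lam a k) (Cmul (RC (/ sqrt NK)) (Cconj (phi lam a k))))
          with (Cmul (RC (/ sqrt NK)) (Cmul (phi lam a k) (Cconj (phi lam a k)))) by ring.
        rewrite Cmul_conj, Cmul_RC, phi_norm. reflexivity.
Qed.

(** For n = 1 the bracket equals (r - 1)/2 < 0, so the hypothesis excludes n = 1. *)
Lemma bracket_one_negative r : 0 <= r < 1 ->
  ((1 + r) ^ 2 - 2 / INR 1 - 2 * r / INR 1) / (2 * (1 + r)) < 0.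
Proof.
  intros Hr. simpl INR.
  replace (((1 + r) ^ 2 - 2 / 1 - 2 * r / 1) / (2 * (1 + r))) with ((r - 1) / 2) by (field; lra).
  lra.
Qed.

(** The square of the claimed constant is at most (n-1)(1+r²)/(1-r²), the limit of the
    ratios in [ratio_exceeds]; so every c below the constant has
    max(c,0)² (1-r²) < (n-1)(1+r²). *)
Lemma target_below_ratio n r c : (2 <= n)%nat -> 0 <= r < 1 ->
  0 <= ((1 + r) ^ 2 - 2 / INR n - 2 * r / INR n) / (2 * (1 + r)) ->
  c < sqrt (INR n / (1 - r)) * sqrt (((1 + r) ^ 2 - 2 / INR n - 2 * r / INR n) / (2 * (1 + r))) ->
  Rmax c 0 ^ 2 * (1 - r * r) < (INR n - 1) * (1 + r * r).
Proof.
  intros Hn Hr HB Hc.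
  assert (Hn2 : 2 <= INR n) by (replace 2 with (INR 2) by (simpl; ring); apply le_INR; auto).
  set (X := INR n / (1 - r)) in *.
  set (B := ((1 + r) ^ 2 - 2 / INR n - 2 * r / INR n) / (2 * (1 + r))) in *.
  assert (HX : 0 <= X) by (apply Rmult_le_pos; [lra | apply Rlt_le, Rinv_0_lt_compat; lra]).
  assert (HXB : X * B * (1 - r * r) <= (INR n - 1) * (1 + r * r)).
  { replace (X * B * (1 - r * r)) with ((INR n * (1 + r) * (1 + r) - 2 - 2 * r) / 2)
      by (unfold X, B; field; lra).
    assert (0 <= (1 - r) * (INR n * (1 - r) / 2 + r)) by (apply Rmult_le_pos; nra).
    replace ((INR n - 1) * (1 + r * r)) with
      ((INR n * (1 + r) * (1 + r) - 2 - 2 * r) / 2 + (1 - r) * (INR n * (1 - r) / 2 + r))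
      by field.
    lra. }
  assert (H1r : 0 < 1 - r * r) by nra.
  destruct (Rle_dec c 0) as [Hc0 | Hc0].
  - rewrite Rmax_right by auto. pose proof (pos_INR n). nra.
  - rewrite Rmax_left by lra.
    assert (c ^ 2 < X * B).
    { rewrite <- (sqrt_sqrt (X * B)), sqrt_mult by (auto; apply Rmult_le_pos; auto).
      simpl. nra. }
    nra.
Qed.

Lemma le_sqrt_of_sq c l : Rmax c 0 ^ 2 <= l -> c <= sqrt l.
Proof.
  intros H. pose proof (Rmax_l c 0).
  rewrite <- (sqrt_pow2 (Rmax c 0)) in H0 by apply Rmax_r.
  pose proof (sqrt_le_1_alt _ _ H). lra.
Qed.

Theorem theoremB (n : nat) (lam : Cx) :
  (1 <= n)%nat -> inD lam ->
  0 <= ((1 + Cmod lam) ^ 2 - 2 / INR n - 2 * Cmod lam / INR n) / (2 * (1 + Cmod lam)) ->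
  I_ge (repeat lam n) w_H2 w_Dirichlet
    (sqrt (INR n / (1 - Cmod lam)) *
     sqrt (((1 + Cmod lam) ^ 2 - 2 / INR n - 2 * Cmod lam / INR n) / (2 * (1 + Cmod lam)))).
Proof.
  intros Hn Hlam Hbr c Hc. pose proof (Cmod_nonneg lam) as Hr0. pose proof Hlam as Hr. unfold inD in Hr.
  destruct n as [|[|a]]; [lia | pose proof (bracket_one_negative _ (conj Hr0 Hr)); lra |].
  set (s := Cnorm2 lam). set (c2 := Rmax c 0 ^ 2).
  assert (Hs : 0 <= s < 1) by (unfold s; rewrite <- Cmod_sq; nra).
  assert (Hc20 : 0 <= c2) by apply pow2_ge_0.
  (* c2 lies below the limiting ratio (a+1)(1+s)/(1-s), so some truncation order K works. *)
  assert (Hc2 : c2 * (1 - s) < (INR a + 1) * (1 + s)).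
  { unfold c2, s. rewrite <- Cmod_sq.
    replace (INR a + 1) with (INR (S (S a)) - 1) by (rewrite !S_INR; ring).
    apply target_below_ratio; auto; lia. }
  destruct (dual_weight_summable s a Hs) as [D HD].
  destruct (ratio_exceeds s a Hs D c2 HD Hc20 Hc2) as [K HK].
  pose proof (dual_weight_sum_ge s a Hs D HD). pose proof (pos_INR a).
  destruct (test_function lam a K ltac:(fold s; nra)) as [f [Hf [Hf1 Hpf]]].
  exists f. split; [exact Hf | split].
  - intros l Hl. rewrite (uniqueness_sum _ _ _ Hl Hf1), sqrt_1. lra.
  - (* ψ(g) = ψ(f) = √N_K, and Cauchy–Schwarz gives N_K ≤ D ‖g‖² *)
    intros g [Hg _] Htr l Hl.
    pose proof (psi_trace_invariant lam a f g _ Hlam (proj1 Hf) Hg Htr Hpf) as Hpg.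
    pose proof (psi_dirichlet_bound lam a g _ D l Hlam Hpg HD Hl) as HCS.
    rewrite Cmod_RC, Rabs_right, sqrt_sqrt in HCS by (try apply Rle_ge, sqrt_pos; fold s; nra).
    apply le_sqrt_of_sq. fold c2. apply Rlt_le, (Rmult_lt_reg_r D); [lra | fold s in HCS; lra].
Qed.
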